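(* Let $\mathcal{C}=\{C_3,C_4,C_5,\dots\}$ be the family of all cycles. For every integer $k\geq 2$, $\mathcal{E}_\mathcal{C}(k)=\mathcal{E}^*_\mathcal{C}(k)=\binom{k}{2}$, and the only multigraph $G$ (without isolated vertices) with $\operatorname{ex}(G,\mathcal{C})<k$ and $e(G)=\binom k2$ is $K_k$ (so $K_k$ is also the only extremal graph for $\mathcal{E}_\mathcal{C}(k)$).
   Context: Multigraphs are 2-uniform, may have parallel edges but no loops; $e(\cdot)$ counts edges with multiplicity. A pair of parallel edges is not a member of $\mathcal{C}$. $\operatorname{ex}(G,\mathcal{C})$ is the maximum number of edges of a sub-multigraph of $G$ containing no member of $\mathcal{C}$. $\mathcal{E}_\mathcal{C}(k):=\sup\{e(G): G\text{ simple}, \operatorname{ex}(G,\mathcal{C})<k\}$, $\mathcal{E}^*_\mathcal{C}(k):=\sup\{e(G): G\text{ multigraph}, \operatorname{ex}(G,\mathcal{C})<k\}$. Graphs have no isolated vertices. *)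

From mathcomp Require Import all_boot.
Set Implicit Arguments. Unset Strict Implicit. Unset Printing Implicit Defensive.

(* A (finite, loopless) multigraph on vertex set 'I_n is given by its
   multiplicity function m : m i j = number of parallel edges between i and j. *)
Definition multigraph (n : nat) (m : 'I_n -> 'I_n -> nat) : Prop :=
  (forall i j, m i j = m j i) /\ (forall i, m i i = 0).

Definition simple_graph (n : nat) (m : 'I_n -> 'I_n -> nat) : Prop :=
  multigraph m /\ (forall i j, m i j <= 1).

Definition nedges (n : nat) (m : 'I_n -> 'I_n -> nat) : nat :=
  \sum_(i < n) \sum_(j < n | i < j) m i j.

Definition no_isolated (n : nat) (m : 'I_n -> 'I_n -> nat) : Prop :=
  forall i, exists j, 0 < m i j.

(* sub-multigraph m' of m (on the same vertex set; isolated vertices of m'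
   do not matter for edge counts or cycles) *)
Definition sub_multigraph (n : nat) (m' m : 'I_n -> 'I_n -> nat) : Prop :=
  multigraph m' /\ (forall i j, m' i j <= m i j).

(* m contains a member of C = {C_3, C_4, ...}: a cycle through l >= 3
   distinct vertices v_0,...,v_{l-1} with v_t adjacent to v_{t+1 mod l}.
   (A pair of parallel edges is not a cycle in C.) *)
Definition has_cycle (n : nat) (m : 'I_n -> 'I_n -> nat) : Prop :=
  exists s : seq 'I_n, [/\ 3 <= size s, uniq s & cycle (fun x y => 0 < m x y) s].

(* ex(G, C) < k : every C-free sub-multigraph of G has fewer than k edges
   (i.e. the maximum of such edge counts is < k). *)
Definition ex_cycles_lt (n : nat) (m : 'I_n -> 'I_n -> nat) (k : nat) : Prop :=
  forall m', sub_multigraph m' m -> ~ has_cycle m' -> nedges m' < k.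

From mathcomp Require Import all_boot zify.
Set Implicit Arguments. Unset Strict Implicit. Unset Printing Implicit Defensive.

(* A star is acyclic, so ex(G) < k bounds every degree by k - 1.  If vu is an
   edge of multiplicity mu, adding the mu parallel edges vu as a pendant bundle
   to an acyclic subgraph of G - v keeps it acyclic, whence
   ex(G - v) < k - mu <= k - 1.  Induction on k gives
   e(G) = e(G - v) + deg v <= C(k-1, 2) + (k - 1) = C(k, 2).  In the equality
   case these estimates force mu = 1 and deg v = k - 1 at every edge, so G is a
   simple (k-1)-regular graph with C(k, 2) edges, i.e. K_k.  Conversely,
   removing leaves shows that a forest has fewer edges than non-isolated
   vertices, so ex(K_k) < k. *)

Lemma bin2_double k : ('C(k, 2)).*2 = k * k.-1.
Proof.
elim: k => [//|k IH]; rewrite binS bin1 doubleD IH; case: k {IH} => //= k; lia.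
Qed.

Lemma sum_nat_neq n (i : 'I_n) : \sum_(l < n) (l != i : nat) = n.-1.
Proof.
rewrite (bigD1 i) //= eqxx add0n (eq_bigr (fun _ => 1)); last by move=> l ->.
by rewrite sum1_card cardC1 card_ord.
Qed.

Lemma cycle_rot_at (T : eqType) (r : rel T) s v :
  v \in s -> 3 <= size s -> uniq s -> cycle r s ->
  exists a b t, uniq (v :: a :: b :: t) /\ cycle r (v :: a :: b :: t).
Proof.
move=> vs s3 us cs; have [i s' Es] := rot_to vs.
have : 3 <= size (v :: s') by rewrite -Es size_rot.
have : uniq (v :: s') by rewrite -Es rot_uniq.
have : cycle r (v :: s') by rewrite -Es rot_cycle.
by case: s' {Es} => [|a [|b t]] // c u _; exists a, b, t.
Qed.

Section Graphs.
Variable n : nat.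
Implicit Types (m f g : 'I_n -> 'I_n -> nat) (v u : 'I_n).

Definition deg m v := \sum_(j < n) m v j.

(* G - v, with v kept as an isolated vertex so that the vertex type stays 'I_n. *)
Definition del_vertex m v : 'I_n -> 'I_n -> nat :=
  fun i j => if (i == v) || (j == v) then 0 else m i j.

Definition star m v : 'I_n -> 'I_n -> nat :=
  fun i j => if (i == v) || (j == v) then m i j else 0.

Lemma mult_le_deg m v u : m v u <= deg m v.
Proof. by rewrite /deg (bigD1 u) //= leq_addr. Qed.

Lemma multigraph_del_vertex m v : multigraph m -> multigraph (del_vertex m v).
Proof.
by move=> [sm m0]; split=> [i j|i]; rewrite /del_vertex ?m0 ?if_same // orbC sm.
Qed.

Lemma multigraph_star m v : multigraph m -> multigraph (star m v).
Proof.
by move=> [sm m0]; split=> [i j|i]; rewrite /star ?m0 ?if_same // orbC sm.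
Qed.

Lemma eq_nedges f g : f =2 g -> nedges f = nedges g.
Proof. by move=> fg; apply: eq_bigr => i _; apply: eq_bigr => j _. Qed.

Lemma nedgesD f g : nedges (fun i j => f i j + g i j) = nedges f + nedges g.
Proof. by rewrite /nedges -big_split; apply: eq_bigr => i _; rewrite -big_split. Qed.

Lemma nedges_double m : multigraph m -> (nedges m).*2 = \sum_(i < n) deg m i.
Proof.
move=> [sm m0].
have lower : \sum_(i < n) \sum_(j < n | ~~ (i < j)) m i j = nedges m.
  rewrite /nedges (exchange_big_dep predT) //=; apply: eq_bigr => i _.
  rewrite (bigD1 i) ?ltnn //= m0 add0n; apply: eq_big => [j|j _]; last exact: sm.
  by rewrite -leqNgt ltn_neqAle eq_sym andbC.
rewrite -addnn -{2}lower -big_split; apply: eq_bigr => i _.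
by rewrite /deg [RHS](bigID (fun j : 'I_n => i < j)).
Qed.

Lemma nedges_star m v : multigraph m -> nedges (star m v) = deg m v.
Proof.
move=> mm; have [sm m0] := mm; apply: double_inj.
rewrite nedges_double; last exact: multigraph_star.
rewrite (bigD1 v) //= -addnn; congr (_ + _).
  by apply: eq_bigr => j _; rewrite /star eqxx.
rewrite /deg [RHS](bigD1 v) //= m0 add0n; apply: eq_bigr => i iv.
rewrite (bigD1 v) //= /star eqxx orbT sm big1 ?addn0 // => j /negbTE jv.
by rewrite (negbTE iv) jv.
Qed.

Lemma nedges_del_vertex m v :
  multigraph m -> nedges m = nedges (del_vertex m v) + deg m v.
Proof.
move=> mm; rewrite -nedges_star // -nedgesD; apply: eq_nedges => i j.
by rewrite /del_vertex /star; case: (_ || _); rewrite ?addn0.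
Qed.

Lemma has_cycle_le f g : (forall i j, f i j <= g i j) -> has_cycle f -> has_cycle g.
Proof.
move=> fg [s [s3 us cs]]; exists s; split=> //.
by apply: sub_cycle cs => x y /leq_trans; apply.
Qed.

Lemma star_acyclic m v : ~ has_cycle (star m v).
Proof.
have off a b : a != v -> b != v -> star m v a b = 0.
  by rewrite /star => /negbTE-> /negbTE->.
(* Every cycle has an edge avoiding v. *)
move=> [s [s3 us cs]]; case: (boolP (v \in s)) => vs.
  have [a [b [t []]]] := cycle_rot_at vs s3 us cs.
  rewrite /= !inE => /and3P[/norP[va /norP[vb _]] _ _] /and3P[_].
  by rewrite off // eq_sym.
move: s s3 us cs vs => [|x [|y t]] // _ _ /andP[]; rewrite !inE.
by move=> + _ /norP[vx /norP[vy _]]; rewrite off // eq_sym.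
Qed.

Definition add_pendant f v u c : 'I_n -> 'I_n -> nat :=
  fun i j => f i j + (if (i == v) && (j == u) || (i == u) && (j == v) then c else 0).

Section Pendant.
Variables (f : 'I_n -> 'I_n -> nat) (v u : 'I_n) (c : nat).
Hypotheses (mf : multigraph f) (fv0 : forall j, f v j = 0) (uv : u != v).

Let f0v j : f j v = 0. Proof. by rewrite mf.1. Qed.

Lemma multigraph_add_pendant : multigraph (add_pendant f v u c).
Proof.
split=> [i j|i]; rewrite /add_pendant.
  by rewrite mf.1 orbC !(andbC (j == _)).
by rewrite mf.2 add0n; case: eqP => [->|_]; rewrite ?andbF // eq_sym (negbTE uv).
Qed.

Lemma nedges_add_pendant : nedges (add_pendant f v u c) = nedges f + c.
Proof.
rewrite (nedges_del_vertex v multigraph_add_pendant); congr (_ + _).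
  apply: eq_nedges => i j; rewrite /del_vertex /add_pendant.
  case: eqP => [->|_]; first by rewrite fv0.
  by case: eqP => [->|_]; rewrite ?f0v // andbF addn0.
rewrite /deg (bigD1 u) //= big1 => [|j /negbTE ju].
  by rewrite /add_pendant fv0 !eqxx addn0.
by rewrite /add_pendant fv0 ju andbF eq_sym (negbTE uv).
Qed.

Lemma add_pendant_acyclic : ~ has_cycle f -> ~ has_cycle (add_pendant f v u c).
Proof.
move=> nf [s [s3 us cs]]; case: (boolP (v \in s)) => vs.
  (* Both neighbours of v on the cycle would have to be u. *)
  have [a [b [t [ut]]]] := cycle_rot_at vs s3 us cs.
  rewrite /= rcons_path => /and4P[+ _ _]; rewrite /add_pendant fv0 f0v !add0n eqxx.
  rewrite (eq_sym v u) (negbTE uv) andbF /= orbF andbT.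
  case: eqP => [au _|]; last by rewrite ltnn.
  case: eqP => [lu _|]; last by rewrite ltnn.
  by move: ut => /= /and3P[_ + _]; rewrite au -lu mem_last.
apply: nf; exists s; split=> //.
apply: (sub_in_cycle (P := predC1 v)) cs => [x y /= xv yv|].
  by rewrite /add_pendant (negbTE xv) (negbTE yv) andbF addn0.
by apply/allP => x xs /=; apply: contraNneq vs => <-.
Qed.
End Pendant.

Lemma del_vertex_le m v i j : del_vertex m v i j <= m i j.
Proof. by rewrite /del_vertex; case: ifP. Qed.

Lemma nedges_gt0 m : 0 < nedges m -> exists v u, 0 < m v u.
Proof.
rewrite lt0n sum_nat_eq0 negb_forall => /existsP[v /=].
rewrite sum_nat_eq0 negb_forall => /existsP[u /=].
by rewrite negb_imply -lt0n => /andP[_ muv]; exists v, u.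
Qed.

Lemma deg_lt_ex m k v : multigraph m -> ex_cycles_lt m k -> deg m v < k.
Proof.
move=> mm exk; rewrite -nedges_star //; apply: exk (@star_acyclic m v).
by split=> [|i j]; [exact: multigraph_star | rewrite /star; case: ifP].
Qed.

Lemma ex_cycles_lt_del_vertex m k v u : multigraph m -> ex_cycles_lt m k ->
  0 < m v u -> ex_cycles_lt (del_vertex m v) (k - m v u).
Proof.
move=> mm exk muv f [mf fm] nf.
have fv0 j : f v j = 0.
  by apply/eqP; rewrite -leqn0 (leq_trans (fm v j)) // /del_vertex eqxx.
have uv : u != v by apply: contraTneq muv => ->; rewrite mm.2.
have sub : sub_multigraph (add_pendant f v u (m v u)) m.
  split=> [|i j]; first exact: multigraph_add_pendant.
  rewrite /add_pendant; case: (i =P v) => [->|_].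
    by rewrite fv0 (eq_sym v u) (negbTE uv) /= orbF; case: eqP => [->|].
  case: (j =P v) => [->|_].
    by rewrite mf.1 fv0 andbT /=; case: eqP => [->|]; rewrite // mm.1.
  by rewrite andbF addn0 (leq_trans (fm i j)) ?del_vertex_le.
have := exk _ sub (add_pendant_acyclic mf fv0 uv nf).
rewrite nedges_add_pendant //; lia.
Qed.

Lemma nedges_le_bin2 k m : multigraph m -> ex_cycles_lt m k -> nedges m <= 'C(k, 2).
Proof.
elim: k m => [|k IH] m mm exk.
  have zero_sub : sub_multigraph (fun _ _ => 0) m by do !split.
  have zero_acyclic : ~ has_cycle (fun _ _ : 'I_n => 0) by case=> [[|x [|y t]] []].
  by have := exk _ zero_sub zero_acyclic.
case: (posnP (nedges m)) => [-> //|/nedges_gt0[v [u muv]]].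
rewrite (nedges_del_vertex v mm) binS bin1 leq_add //.
  apply: IH; first exact: multigraph_del_vertex.
  move=> f sf nf; apply: leq_trans (ex_cycles_lt_del_vertex mm exk muv sf nf) _; lia.
by rewrite -ltnS deg_lt_ex.
Qed.

Lemma extremal_edge k m v u : multigraph m -> ex_cycles_lt m k ->
  nedges m = 'C(k, 2) -> 0 < m v u -> m v u = 1 /\ deg m v = k.-1.
Proof.
move=> mm exk em muv.
have rest := nedges_le_bin2 (multigraph_del_vertex v mm)
  (ex_cycles_lt_del_vertex mm exk muv).
have dk := deg_lt_ex v mm exk.
have mud := mult_le_deg m v u.
(* With mu := m v u: k(k-1) = 2 e(G - v) + 2 deg v <= (k-mu)(k-mu-1) + 2 deg v
   and mu <= deg v <= k - 1 leave only mu = 1, deg v = k - 1. *)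
move: rest (congr1 double em).
rewrite -leq_double !bin2_double (nedges_del_vertex v mm) doubleD; nia.
Qed.

Lemma adj_of_full_deg m i j : simple_graph m -> deg m i = n.-1 -> j != i -> m i j = 1.
Proof.
move=> [[_ m0] m1] di ji.
have le l : m i l <= (l != i) ?= iff (m i l == (l != i)).
  by apply: leqif_eq; case: eqP => [->|_]; rewrite ?m0 ?m1.
have := (leqif_sum (P := xpredT) (fun l _ => le l)).2.
by rewrite -/(deg m i) di sum_nat_neq eqxx => /esym/forallP/(_ j); rewrite ji => /eqP.
Qed.

Lemma extremal_complete k m : 2 <= k -> multigraph m -> no_isolated m ->
  ex_cycles_lt m k -> nedges m = 'C(k, 2) -> n = k /\ (forall i j, i != j -> m i j = 1).
Proof.
move=> k2 mm noi exk em.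
have m1 i j : m i j <= 1.
  by case: (posnP (m i j)) => [->|/(extremal_edge mm exk em)[->]].
have dk i : deg m i = k.-1 by have [j /(extremal_edge mm exk em)[]] := noi i.
have nk : n = k.
  apply/eqP; rewrite -(eqn_pmul2r (_ : 0 < k.-1)); last by case: k k2 {exk em dk}.
  rewrite -bin2_double -em nedges_double // (eq_bigr _ (fun i _ => dk i)).
  by rewrite sum_nat_const card_ord.
split=> // i j ij; apply: adj_of_full_deg.
- by split.
- by rewrite dk nk.
- by rewrite eq_sym.
Qed.

Section Leaf.
Variable f : 'I_n -> 'I_n -> nat.
Hypotheses (mf : multigraph f) (nf : ~ has_cycle f).
Let adj := fun x y : 'I_n => 0 < f x y.

Definition has_leaf := exists z y, 0 < f z y /\ forall w, 0 < f z w -> w = y.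

Lemma leaf_or_extend z y s : uniq (z :: y :: s) -> path adj z (y :: s) ->
  has_leaf \/ exists w, uniq (w :: z :: y :: s) /\ path adj w (z :: y :: s).
Proof.
move=> us ps; have [fs f0] := mf.
case: (pickP (fun w => adj z w && (w != y))) => [w /andP[zw wy]|only_y]; last first.
  left; exists z, y; split; first by case/andP: ps.
  by move=> w zw; apply/eqP; move: (only_y w); rewrite /adj zw => /negbFE.
case: (boolP (w \in z :: y :: s)) => ws; last first.
  right; exists w; split; first by rewrite cons_uniq ws.
  by apply/andP; split; first by rewrite /adj fs.
(* A second neighbour w of z lying on the path closes a cycle. *)
have wz : w != z by apply: contraTneq zw => ->; rewrite /adj f0.
move: ws; rewrite !inE (negbTE wz) (negbTE wy) /= => ws.
case/splitPr: ws us ps => s1 s2 us ps.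
case: nf; exists (z :: y :: rcons s1 w); split.
- by rewrite /= size_rcons.
- by move: us; rewrite -cats1 -!cat_cons -(cat1s w s2) catA cat_uniq => /andP[].
- move: ps => /= /andP[zy]; rewrite cat_path => /andP[p1 /andP[p2 _]].
  rewrite -/adj /= rcons_path last_rcons rcons_path.
  by apply/and3P; split=> //; [apply/andP | rewrite /adj fs].
Qed.

(* The fuel d suffices because a duplicate-free path has at most n vertices. *)
Lemma leaf_of_path d z y s : n - size (z :: y :: s) <= d ->
  uniq (z :: y :: s) -> path adj z (y :: s) -> has_leaf.
Proof.
elim: d z y s => [|d IH] z y s hd us ps.
all: case: (leaf_or_extend us ps) => // [[w [uw pw]]].
  have := max_card (mem (w :: z :: y :: s)); rewrite card_ord (card_uniqP uw) /=.
  by move: hd => /=; lia.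
by apply: IH uw pw; move: hd => /=; lia.
Qed.

Lemma leaf_exists a b : 0 < f a b -> has_leaf.
Proof.
move=> ab; apply: (@leaf_of_path n a b [::]); first by rewrite leq_subr.
  by rewrite /= inE andbT; apply: contraTneq ab => ->; rewrite mf.2.
by rewrite /= /adj ab.
Qed.
End Leaf.

Definition nonisolated m := [set i | [exists j, 0 < m i j]].

Lemma nonisolated_del_vertex m v :
  nonisolated (del_vertex m v) \subset nonisolated m :\ v.
Proof.
apply/subsetP => i; rewrite !inE => /existsP[j]; rewrite /del_vertex.
by case: eqP => //= _; case: eqP => //= _ mij; apply/existsP; exists j.
Qed.

Lemma nedges_forest f :
  simple_graph f -> ~ has_cycle f -> nedges f <= #|nonisolated f|.-1.
Proof.
move Ee: (nedges f) => e; elim: e f Ee => [//|e IH] f Ee [mf f1] nf.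
have [a [b /(leaf_exists mf nf)[z [y [zy zl]]]]] : exists a b, 0 < f a b.
  by apply: nedges_gt0; rewrite Ee.
have dz : deg f z = 1.
  rewrite /deg (bigD1 y) //= big1 ?addn0 => [|j jy].
    by apply/eqP; rewrite eqn_leq f1.
  by case: (posnP (f z j)) => // /zl/eqP; rewrite (negbTE jy).
have ez : nedges (del_vertex f z) = e.
  by apply/eqP; rewrite -eqSS -addn1 -dz -nedges_del_vertex // Ee.
have sf : simple_graph (del_vertex f z).
  split=> [|i j]; first exact: multigraph_del_vertex.
  exact: leq_trans (del_vertex_le f z i j) (f1 i j).
have nf' : ~ has_cycle (del_vertex f z) by move/(has_cycle_le (del_vertex_le f z)).
have y_in : y \in nonisolated f :\ z.
  rewrite !inE; apply/andP; split; first by apply: contraTneq zy => ->; rewrite mf.2.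
  by apply/existsP; exists z; rewrite mf.1.
have z_in : z \in nonisolated f by rewrite inE; apply/existsP; exists y.
have := IH _ ez sf nf'; have := subset_leq_card (nonisolated_del_vertex f z).
have : 0 < #|nonisolated f :\ z| by apply/card_gt0P; exists y.
rewrite [#|nonisolated f|](cardsD1 z) z_in; lia.
Qed.
End Graphs.

Definition complete k : 'I_k -> 'I_k -> nat := fun i j => i != j.
Arguments complete : clear implicits.

Lemma simple_complete k : simple_graph (complete k).
Proof.
by split; [split=> [i j|i] | move=> i j]; rewrite /complete ?eqxx ?leq_b1 // eq_sym.
Qed.

Lemma deg_complete k (i : 'I_k) : deg (complete k) i = k.-1.
Proof. by rewrite -(sum_nat_neq i); apply: eq_bigr => j _; rewrite /complete eq_sym. Qed.

Lemma nedges_complete k : nedges (complete k) = 'C(k, 2).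
Proof.
apply: double_inj; rewrite nedges_double; last exact: (simple_complete k).1.
by rewrite bin2_double (eq_bigr _ (fun i _ => deg_complete i)) sum_nat_const card_ord.
Qed.

Lemma ex_cycles_lt_complete k : 0 < k -> ex_cycles_lt (complete k) k.
Proof.
move=> k0 f [mf fK] nf.
have sf : simple_graph f by split=> // i j; apply: leq_trans (fK i j) (leq_b1 _).
have := nedges_forest sf nf; have := subset_leq_card (subsetT (nonisolated f)).
rewrite cardsT card_ord; lia.
Qed.

Unset Implicit Arguments.
Theorem theorem3p8 (k : nat) (hk : 2 <= k) :
  (* E_C(k) = binom(k,2): upper bound over all simple graphs, and attained *)
  ((forall (n : nat) (m : 'I_n -> 'I_n -> nat),
      simple_graph m -> ex_cycles_lt m k -> nedges m <= 'C(k, 2)) /\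
   (exists (n : nat) (m : 'I_n -> 'I_n -> nat),
      [/\ simple_graph m, ex_cycles_lt m k & nedges m = 'C(k, 2)])) /\
  (* E*_C(k) = binom(k,2): upper bound over all multigraphs, and attained *)
  ((forall (n : nat) (m : 'I_n -> 'I_n -> nat),
      multigraph m -> ex_cycles_lt m k -> nedges m <= 'C(k, 2)) /\
   (exists (n : nat) (m : 'I_n -> 'I_n -> nat),
      [/\ multigraph m, ex_cycles_lt m k & nedges m = 'C(k, 2)])) /\
  (* uniqueness: the only extremal multigraph without isolated vertices is K_k *)
  (forall (n : nat) (m : 'I_n -> 'I_n -> nat),
      multigraph m -> no_isolated m -> ex_cycles_lt m k ->
      nedges m = 'C(k, 2) ->
      n = k /\ (forall i j, i != j -> m i j = 1)).
Proof.
have Kk_ex : ex_cycles_lt (complete k) k by apply: ex_cycles_lt_complete; lia.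
split; [split | split; [split|]].
- by move=> n m [mm _]; apply: nedges_le_bin2.
- by exists k, (complete k); split; [exact: simple_complete | | exact: nedges_complete].
- by move=> n m; apply: nedges_le_bin2.
- exists k, (complete k).
  by split; [exact: (simple_complete k).1 | | exact: nedges_complete].
- by move=> n m; apply: extremal_complete.
Qed.
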